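(* Let $q$ be a prime power, $m,u,v$ positive integers, and let $\mathbf y=(y_0,\dots,y_{v-1})\in\mathrm{GF}(q^m)^v$ have rank $w$. Then for every integer $s\ge w$, the number of vectors $\mathbf z=(z_0,\dots,z_{u-1})\in\mathrm{GF}(q^m)^u$ such that $\mathbf x=(\mathbf y,\mathbf z)\in\mathrm{GF}(q^m)^{u+v}$ has rank $s$ is exactly $${u\brack s-w}A(m-w,s-w)\,q^{wu}.$$
   Context: For a vector over $\mathrm{GF}(q^m)$, its rank is the dimension over $\mathrm{GF}(q)$ of the $\mathrm{GF}(q)$-span of its coordinates. $A(a,0)=1$ and $A(a,j)=\prod_{i=0}^{j-1}(q^a-q^i)$ for $j\ge1$; the Gaussian binomial is ${u\brack j}=A(u,j)/A(j,j)$ (which is $0$ when $j>u$). *)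

From HB Require Import structures.
From mathcomp Require Import all_boot all_order all_algebra all_field.
Set Implicit Arguments. Unset Strict Implicit. Unset Printing Implicit Defensive.
Import GRing.Theory.
Local Open Scope ring_scope.

(* A(a, j) = prod_{i<j} (q^a - q^i)  (A(a,0) = 1), computed in nat.
   For i < j the factors with i >= a only occur after the factor i = a,
   which is 0, so truncated subtraction is harmless. *)
Definition Acount (q a j : nat) : nat := (\prod_(i < j) (q ^ a - q ^ i))%N.

(* Gaussian binomial [u choose j]_q = A(u,j)/A(j,j) (exact division; 0 if j > u). *)
Definition gauss_binom (q u j : nat) : nat := (Acount q u j %/ Acount q j j)%N.

Definition rank_vec (K : fieldType) (L : fieldExtType K) (n : nat)
  (x : 'I_n -> L) : nat := \dim <<[seq x i | i <- enum 'I_n]>>%VS.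

Definition catv (K : fieldType) (L : fieldExtType K) (v u : nat)
  (y : 'I_v -> L) (z : 'I_u -> L) : 'I_(v + u) -> L :=
  fun i => match split i with inl j => y j | inr k => z k end.

From HB Require Import structures.
From mathcomp Require Import all_boot all_order all_algebra all_field.
From mathcomp Require Import zify ring.
Set Implicit Arguments. Unset Strict Implicit. Unset Printing Implicit Defensive.

(* Let U be the GF(q)-span of y in F = GF(q^m), of dimension w, and count
   the z in F^u with dim (U + span z) = s by adjoining one coordinate at a
   time: a vector x keeps the dimension d of a space W if x lies in W (q^d
   choices) and raises it by one otherwise (q^m - q^d choices).  Hence the
   counts N_u(s) satisfy N_(u+1)(s+1) = q^(s+1) N_u(s+1) + (q^m - q^s) N_u(s),
   with N_u(w) = q^(wu) (all coordinates in U), and this recurrence is solved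
   by the q-Pascal rule [u+1, j+1] = [u, j] + q^(j+1) [u, j+1] together with
   A(m-w, j+1) = A(m-w, j) (q^(m-w) - q^j). *)

Section GaussianBinomial.
Variable q : nat.

Fixpoint qbinom (u j : nat) : nat :=
  match u, j with
  | 0, j => j == 0
  | u'.+1, 0 => 1
  | u'.+1, j'.+1 => qbinom u' j' + q ^ j'.+1 * qbinom u' j'.+1
  end.

Lemma qbinom_n0 u : qbinom u 0 = 1.
Proof. by case: u. Qed.

Lemma Acount_n0 a : Acount q a 0 = 1.
Proof. by rewrite /Acount big_ord0. Qed.

Lemma AcountSr a j : Acount q a j.+1 = Acount q a j * (q ^ a - q ^ j).
Proof. by rewrite /Acount big_ord_recr. Qed.

Lemma AcountSS a j : Acount q a.+1 j.+1 = (q ^ a.+1 - 1) * q ^ j * Acount q a j.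
Proof.
rewrite /Acount big_ord_recl /= expn0 -mulnA; congr (_ * _).
rewrite (eq_bigr (fun i : 'I_j => q * (q ^ a - q ^ i))); last first.
  by move=> i _; rewrite /bump /= add1n !expnS mulnBr.
by rewrite big_split /= prod_nat_const card_ord.
Qed.

Lemma Acount_eq0 a j : a < j -> Acount q a j = 0.
Proof. by move=> lt_aj; rewrite /Acount (bigD1 (Ordinal lt_aj)) //= subnn. Qed.

Hypothesis q_gt1 : 1 < q.

Lemma Acount_diag_gt0 j : 0 < Acount q j j.
Proof. by rewrite /Acount prodn_gt0 // => i; rewrite subn_gt0 ltn_exp2l. Qed.

Lemma qbinom_Acount u j : qbinom u j * Acount q j j = Acount q u j.
Proof.
elim: u j => [|u IH] [|j] /=.
- by rewrite Acount_n0.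
- by rewrite mul0n Acount_eq0.
- by rewrite !Acount_n0.
rewrite mulnDl -mulnA IH (AcountSS j j) mulnCA IH AcountSS AcountSr.
have [le_ju | lt_uj] := leqP j u; last by rewrite Acount_eq0 // !(mul0n, muln0).
have pascal : q ^ j.+1 - 1 + q * (q ^ u - q ^ j) = q ^ u.+1 - 1.
  have le_qj_qu : q ^ j <= q ^ u by rewrite leq_exp2l // ltnW.
  have qj_gt0 : 0 < q ^ j by rewrite expn_gt0 ltnW.
  rewrite !expnS mulnBr; nia.
by rewrite -pascal expnS; ring.
Qed.

Lemma gauss_binomE u j : gauss_binom q u j = qbinom u j.
Proof. by rewrite /gauss_binom -qbinom_Acount mulnK // Acount_diag_gt0. Qed.

End GaussianBinomial.

Lemma card_set_sum (T : finType) (P : pred T) : #|[set z | P z]| = \sum_z P z.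
Proof. by rewrite -sum1dep_card big_mkcond. Qed.

Section FfunCons.
Variable T : finType.

Definition ffun_cons u (x : T) (z : {ffun 'I_u -> T}) : {ffun 'I_u.+1 -> T} :=
  [ffun i => if unlift ord0 i is Some j then z j else x].

Lemma sum_ffunS u (P : {ffun 'I_u.+1 -> T} -> nat) :
  \sum_f P f = \sum_(z : {ffun 'I_u -> T}) \sum_(x : T) P (ffun_cons x z).
Proof.
rewrite pair_big /=.
rewrite (reindex (fun p : {ffun 'I_u -> T} * T => ffun_cons p.2 p.1)) //.
apply: onW_bij.
exists (fun f : {ffun 'I_u.+1 -> T} => ([ffun j => f (lift ord0 j)], f ord0)).
  case=> z x /=; congr pair; last by rewrite ffunE unlift_none.
  by apply/ffunP => j; rewrite !ffunE liftK.
by move=> f; apply/ffunP => i; rewrite ffunE; case: unliftP => [j|] ->; rewrite ?ffunE.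
Qed.

End FfunCons.

Section ExtensionCount.
Variables (K : finFieldType) (L : fieldExtType K).
Local Notation F := (finvect_type L).
Local Notation q := #|K|.
Local Notation m := (\dim {:L}).

Definition span_coords n (z : 'I_n -> F) : {vspace F} := (\sum_(i < n) <[z i]>)%VS.

Lemma rank_vecE n (x : 'I_n -> L) : rank_vec x = \dim (span_coords x).
Proof. by rewrite /rank_vec span_def big_map big_enum. Qed.

Lemma span_coords_cat v u (y : 'I_v -> L) (z : 'I_u -> L) :
  span_coords (catv y z) = (span_coords y + span_coords z)%VS.
Proof.
rewrite /span_coords big_split_ord /catv.
by congr (_ + _)%VS; apply: eq_bigr => i _;
  rewrite ?(unsplitK (inl _ _)) ?(unsplitK (inr _ _)).
Qed.

Lemma span_coords_cons u x (z : {ffun 'I_u -> F}) :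
  span_coords (ffun_cons x z) = (<[x]> + span_coords z)%VS.
Proof.
rewrite /span_coords big_ord_recl ffunE unlift_none; congr (_ + _)%VS.
by apply: eq_bigr => i _; rewrite ffunE liftK.
Qed.

Lemma card_finvect : #|F| = q ^ m.
Proof.
rewrite -(card_vspace (fullv : {vspace F})).
by apply: eq_card => x; rewrite memvf.
Qed.

Lemma dim_addv_line (V : {vspace F}) (x : F) :
  \dim (V + <[x]>)%VS = if x \in V then \dim V else (\dim V).+1.
Proof.
have [xV | xNV] := boolP (x \in V).
  by move: xV; rewrite memvE => /addv_idPl ->.
apply/eqP; rewrite eqn_leq; apply/andP; split.
  apply: leq_trans (dimv_add_leqif V <[x]>).1 _.
  by rewrite -addn1 leq_add2l dim_vline leq_b1.
rewrite (ltn_leqif (dimv_leqif_sup (addvSl V <[x]>))).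
by apply: contra xNV; rewrite memvE; apply: subv_trans (addvSr V _).
Qed.

Lemma sum_dim_addv_line (V : {vspace F}) (s : nat) :
  \sum_(x : F) (\dim (V + <[x]>)%VS == s : nat)
  = (\dim V == s) * q ^ \dim V + ((\dim V).+1 == s) * (q ^ m - q ^ \dim V).
Proof.
rewrite (bigID (mem V)) /=; congr (_ + _).
  rewrite (eq_bigr (fun _ => (\dim V == s : nat))) => [|x xV]; last first.
    by rewrite dim_addv_line xV.
  by rewrite sum_nat_const card_vspace mulnC.
rewrite (eq_bigr (fun _ => ((\dim V).+1 == s : nat))) => [|x /negbTE xNV]; last first.
  by rewrite dim_addv_line xNV.
by rewrite sum_nat_const mulnC -card_finvect -card_vspace -(cardC (mem V)) addKn.
Qed.

Definition count_ext (U : {vspace F}) (u s : nat) :=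
  #|[set z : {ffun 'I_u -> F} | \dim (U + span_coords z)%VS == s]|.

Lemma count_ext0 (U : {vspace F}) (s : nat) : count_ext U 0 s = (\dim U == s).
Proof.
rewrite /count_ext card_set_sum.
rewrite (eq_bigr (fun _ => (\dim U == s : nat))) => [|z _]; last first.
  by rewrite /span_coords big_ord0 addv0.
by rewrite sum_nat_const card_ffun card_ord mul1n.
Qed.

Lemma count_ext_dim (U : {vspace F}) (u : nat) :
  count_ext U u (\dim U) = q ^ (\dim U * u).
Proof.
rewrite /count_ext expnM -card_vspace -[u in _ ^ u]card_ord -card_ffun_on.
apply: eq_card => z; rewrite !inE.
rewrite eq_sym (dimv_leqif_sup (addvSl U _)) subv_add subvv /=.
by apply/subv_sumP/ffun_onP => [sub_zU i | zU i _]; [apply: sub_zU | apply: zU].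
Qed.

Lemma count_extSS (U : {vspace F}) (u s : nat) :
  count_ext U u.+1 s.+1
  = q ^ s.+1 * count_ext U u s.+1 + (q ^ m - q ^ s) * count_ext U u s.
Proof.
rewrite /count_ext !card_set_sum !big_distrr -big_split /= sum_ffunS.
apply: eq_bigr => z _; set W := (U + span_coords z)%VS.
rewrite (eq_bigr (fun x => (\dim (W + <[x]>)%VS == s.+1 : nat))) => [|x _]; last first.
  by rewrite span_coords_cons /W -addvA [(span_coords z + _)%VS]addvC.
rewrite (sum_dim_addv_line W) eqSS; set d := \dim W.
by congr (_ + _); rewrite mulnC; case: eqP => [->|]; rewrite ?muln0.
Qed.

Lemma count_extE (U : {vspace F}) (u j : nat) :
  count_ext U u (\dim U + j)
  = qbinom q u j * Acount q (m - \dim U) j * q ^ (\dim U * u).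
Proof.
have q_gt1 : 1 < q := card_finNzRing_gt1 K.
have le_dimU_m : \dim U <= m by rewrite dimvS ?subvf.
elim: u j => [|u IH] [|j]; rewrite ?addn0 ?count_ext_dim ?qbinom_n0 ?Acount_n0 ?mul1n //.
  by rewrite count_ext0 -{1}[\dim U]addn0 eqn_add2l.
rewrite addnS count_extSS -addnS !IH /= AcountSr.
have -> : q ^ m - q ^ (\dim U + j) = q ^ \dim U * (q ^ (m - \dim U) - q ^ j).
  by rewrite mulnBr -!expnD subnKC.
rewrite mulnS !expnD; ring.
Qed.

End ExtensionCount.

Theorem lemma8 (K : finFieldType) (L : fieldExtType K) (u v : nat)
  (y : 'I_v -> L) (w s : nat) :
  (0 < u)%N -> (0 < v)%N -> rank_vec y = w -> (w <= s)%N ->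
  #|[set z : {ffun 'I_u -> finvect_type L} | rank_vec (catv y z) == s]|
  = (gauss_binom #|K| u (s - w) * Acount #|K| (\dim {:L} - w) (s - w)
       * #|K| ^ (w * u))%N.
Proof.
move=> _ _ rank_y le_ws.
rewrite gauss_binomE ?card_finNzRing_gt1 //.
have dim_y : \dim (span_coords (y : 'I_v -> finvect_type L)) = w by rewrite -rank_vecE.
rewrite -dim_y -count_extE dim_y subnKC //.
by apply: eq_card => z; rewrite !inE rank_vecE span_coords_cat.
Qed.
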